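(* Let $\mathcal{X}\subset\mathbb{R}^d$, $\mathcal{Y}=\{1,\dots,c\}$, and let $D$ be a distribution on $\mathcal{X}\times\mathcal{Y}$ that is $k$-separable with $\delta$-margin (for some $\delta>0$), witnessed by a unit vector $a\in\mathbb{R}^d$, constants $b_1<b_2<\cdots<b_{k+1}$ and labels $y_1,\dots,y_k\in\mathcal{Y}$ as in the definition below. Let $f:\mathcal{Y}\to\mathbb{R}^m$ be injective, and regard $f(y)$ as the desired output for an input $x$ with label $y$. Define $W\in\mathbb{R}^{k\times m}$ to be the matrix whose first row is $f(y_1)^T$ and whose $i$-th row, for $2\le i\le k$, is $f(y_i)^T-f(y_{i-1})^T$; write $W=[w_1\;w_2\;\cdots\;w_m]$ with columns $w_j\in\mathbb{R}^k$, and assume $\max_j\|w_j\|_2>0$. Fix $\epsilon>0$ and set $$c_s=\frac{1}{\delta}\log\!\left(\frac{\sqrt{k}\,\max_{1\le j\le m}\|w_j\|_2}{\epsilon}\right).$$ Define the 2-layer network $g:\mathcal{X}\to\mathbb{R}^m$ by $$g(x)=W^T\big(\rho(c_s a^Tx-c_sb_1),\ \rho(c_s a^Tx-c_sb_2),\ \dots,\ \rho(c_s a^Tx-c_sb_k)\big)^T .$$ Then $$\mathbb{P}_{(x,y)\sim D}\Big(\max_{1\le j\le m}|g_j(x)-f_j(y)|>\epsilon\Big)=0,$$ where $g_j,f_j$ denote $j$-th components. This network is specified by $d+(m+1)k$ real parameters (the $d$ entries of $c_sa$, the $k$ hidden biases $c_sb_1,\dots,c_sb_k$, and the $mk$ entries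 of $W$).
   Context: $\rho(t)=1/(1+e^{-t})$ is the sigmoid function. Definition ($k$-separable with $\delta$-margin): Let $\mathcal{X}\subset\mathbb{R}^d$ and $\mathcal{Y}=\{1,\dots,c\}$. A distribution $D$ over $\mathcal{X}\times\mathcal{Y}$ is $k$-separable with $\delta$-margin ($\delta>0$) if there exist a projection vector $a\in\mathbb{R}^d$ with $\|a\|_2=1$ and constants $b_1<b_2<\cdots<b_{k+1}$ such that, setting $\mathcal{X}_i=\{x\in\mathcal{X}: b_i+\delta<a^Tx<b_{i+1}-\delta\}$ for $i\in\{1,\dots,k\}$: (i) for each $i$ there is $y_i\in\mathcal{Y}$ with $\mathbb{P}_{(x,y)\sim D}(y=y_i\mid x\in\mathcal{X}_i)=1$; (ii) $\mathbb{P}_{(x,y)\sim D}\big(x\in\bigcup_{i=1}^k\mathcal{X}_i\big)=1$. The number $k$ of intervals may exceed the number $c$ of labels. *)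

From Stdlib Require Import Reals Lra.
Open Scope R_scope.

(** Sample space: points x of R^d are represented as functions nat -> R,
    of which only the coordinates 0..d-1 are used; labels are nats. *)
Definition vec := nat -> R.
Definition sample := (vec * nat)%type.

Fixpoint rsum (n : nat) (F : nat -> R) : R :=
  match n with O => 0 | S n' => rsum n' F + F n' end.

(** max_{i<n} F i, with the convention max over the empty range = 0
    (only applied to nonnegative quantities). *)
Fixpoint rmax (n : nat) (F : nat -> R) : R :=
  match n with O => 0 | S O => F O | S n' => Rmax (rmax n' F) (F n') end.

Definition dot (d : nat) (a x : vec) : R := rsum d (fun i => a i * x i).
Definition norm2 (d : nat) (a : vec) : R := sqrt (rsum d (fun i => a i ^ 2)).

Definition rho (t : R) : R := 1 / (1 + exp (- t)).

Record distribution (T : Type) := {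
  meas : (T -> Prop) -> Prop;
  Pr : (T -> Prop) -> R;
  meas_full : meas (fun _ => True);
  meas_compl : forall A, meas A -> meas (fun t => ~ A t);
  meas_cunion : forall A : nat -> T -> Prop,
      (forall n, meas (A n)) -> meas (fun t => exists n, A n t);
  meas_ext : forall A B, (forall t, A t <-> B t) -> meas A -> meas B;
  Pr_ext : forall A B, (forall t, A t <-> B t) -> Pr A = Pr B;
  Pr_nonneg : forall A, meas A -> 0 <= Pr A;
  Pr_full : Pr (fun _ => True) = 1;
  Pr_cadd : forall A : nat -> T -> Prop,
      (forall n, meas (A n)) ->
      (forall n m t, n <> m -> A n t -> A m t -> False) ->
      infinite_sum (fun n => Pr (A n)) (Pr (fun t => exists n, A n t))
}.
Arguments meas {T} d _.
Arguments Pr {T} d _.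

(** The i-th region X_i (i = 0..k-1 here, i.e. paper's index i+1):
    x in X with b_i + delta < a^T x < b_{i+1} - delta. *)
Definition region (d : nat) (X : vec -> Prop) (a b : vec) (delta : R)
  (i : nat) (x : vec) : Prop :=
  X x /\ b i + delta < dot d a x < b (S i) - delta.

Definition distribution_on (D : distribution sample) (X : vec -> Prop) (c : nat)
  : Prop :=
  let S := fun z : sample => X (fst z) /\ (1 <= snd z <= c)%nat in
  meas D S /\ Pr D S = 1.

(** D is k-separable with delta-margin, witnessed by a, b_1<...<b_{k+1}
    (indexed b 0 .. b k) and labels y_1..y_k (indexed y 0 .. y (k-1)). *)
Definition k_separable_witness (D : distribution sample) (X : vec -> Prop)
  (d c k : nat) (delta : R) (a b : vec) (y : nat -> nat) : Prop :=
  0 < delta /\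
  norm2 d a = 1 /\
  (forall i, (i < k)%nat -> b i < b (S i)) /\
  (forall i, (i < k)%nat -> (1 <= y i <= c)%nat) /\
  (forall i, (i < k)%nat ->
     let Xi := fun z : sample => region d X a b delta i (fst z) in
     let XiY := fun z : sample => Xi z /\ snd z = y i in
     meas D Xi /\ meas D XiY /\
     (0 < Pr D Xi -> Pr D XiY / Pr D Xi = 1)) /\
  (let U := fun z : sample =>
      exists i, (i < k)%nat /\ region d X a b delta i (fst z) in
   meas D U /\ Pr D U = 1).

(** The matrix W (k x m): row 0 is f(y_1)^T, row i is f(y_{i+1})^T - f(y_i)^T.
    f y j is the j-th component (j < m) of f(y). *)
Definition Wmat (f : nat -> nat -> R) (y : nat -> nat) (i j : nat) : R :=
  match i with
  | O => f (y O) j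
  | S i' => f (y i) j - f (y i') j
  end.

Definition colnorm (k : nat) (f : nat -> nat -> R) (y : nat -> nat) (j : nat) : R :=
  sqrt (rsum k (fun i => Wmat f y i j ^ 2)).

Definition maxcol (k m : nat) (f : nat -> nat -> R) (y : nat -> nat) : R :=
  rmax m (colnorm k f y).

Definition c_s (k m : nat) (f : nat -> nat -> R) (y : nat -> nat)
  (delta eps : R) : R :=
  / delta * ln (sqrt (INR k) * maxcol k m f y / eps).

Definition gnet (d k : nat) (f : nat -> nat -> R) (y : nat -> nat)
  (a b : vec) (cs : R) (x : vec) (j : nat) : R :=
  rsum k (fun i => Wmat f y i j * rho (cs * dot d a x - cs * b i)).

From Stdlib Require Import Reals Lra Lia Classical.
Open Scope R_scope.

(** On the
    region X_i, a^T x - b_l > delta for l <= i and < -delta for l > i, so each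
    sigmoid is within exp(-cs delta) of the step indicator [l <= i].  Replacing
    the sigmoids by these indicators telescopes the rows of W to f(y_i), hence
    |g_j(x) - f_j(y_i)| <= exp(-cs delta) sum_l |W_lj|
                       <= exp(-cs delta) sqrt k ||w_j||       (Cauchy-Schwarz),
    and the choice of cs makes exp(-cs delta) sqrt k max_j ||w_j|| = eps.

    The regions cover a set of probability one, and in each
    region the label is y_i with conditional probability one; an event that
    avoids every pair (x in X_i, label y_i) is therefore null. *)

Lemma exp_monotone x y : x <= y -> exp x <= exp y.
Proof. intros [H|H]; [left; apply exp_increasing; exact H | subst; lra]. Qed.

Section Probability.

Variable T : Type.
Variable D : distribution T.

Lemma meas_or A B : meas D A -> meas D B -> meas D (fun t => A t \/ B t).
Proof.
  intros HA HB.
  apply (meas_ext _ D (fun t => exists n : nat, (if Nat.eqb n 0 then A else B) t)).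
  - intros t; split.
    + intros [n H]; destruct (Nat.eqb n 0); auto.
    + intros [H|H]; [exists 0%nat | exists 1%nat]; exact H.
  - apply meas_cunion; intros n; destruct (Nat.eqb n 0); assumption.
Qed.

Lemma meas_and A B : meas D A -> meas D B -> meas D (fun t => A t /\ B t).
Proof.
  intros HA HB.
  apply (meas_ext _ D (fun t => ~ (~ A t \/ ~ B t))).
  - intros t; split; [intros H; split; apply NNPP; tauto | tauto].
  - apply meas_compl, meas_or; apply meas_compl; assumption.
Qed.

Lemma meas_empty : meas D (fun _ => False).
Proof.
  apply (meas_ext _ D (fun _ => ~ True)); [tauto | apply meas_compl, meas_full].
Qed.

(** Countable additivity on the constant empty family forces P(empty) = 0:
    otherwise the partial sums n * P(empty) would diverge. *)
Lemma Pr_empty : Pr D (fun _ => False) = 0.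
Proof.
  set (p := Pr D (fun _ => False)).
  assert (Hsum := Pr_cadd _ D (fun _ _ => False) (fun _ => meas_empty)
                    (fun n m t _ H _ => H)).
  rewrite (Pr_ext _ D _ (fun _ => False)) in Hsum
    by (intros; split; [intros [_ h]; exact h | tauto]).
  fold p in Hsum.
  assert (Hp : 0 <= p) by apply Pr_nonneg, meas_empty.
  destruct (Rle_or_lt p 0) as [H1|H1]; [lra|].
  destruct (Hsum p H1) as [N HN].
  specialize (HN (S N) (le_S _ _ (le_n N))).
  unfold R_dist in HN; rewrite sum_cte, !S_INR in HN.
  pose proof (pos_INR N).
  rewrite Rabs_right in HN by nra; nra.
Qed.

(** Finite additivity, from countable additivity padded with empty events. *)
Lemma Pr_disjoint_or A B :
  meas D A -> meas D B -> (forall t, A t -> B t -> False) ->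
  Pr D (fun t => A t \/ B t) = Pr D A + Pr D B.
Proof.
  intros HA HB Hdisj.
  set (C := fun n : nat =>
              match n with 0%nat => A | 1%nat => B | _ => fun _ => False end).
  assert (HC : forall n, meas D (C n))
    by (intros [|[|n]]; simpl; auto using meas_empty).
  assert (HCdisj : forall n m t, n <> m -> C n t -> C m t -> False)
    by (intros [|[|n]] [|[|m]] t; simpl; intros; try lia; eauto).
  assert (Hsum := Pr_cadd _ D C HC HCdisj).
  rewrite (Pr_ext _ D _ (fun t => A t \/ B t)) in Hsum.
  2:{ intros t; split.
      - intros [[|[|n]] h]; simpl in h; tauto.
      - intros [h|h]; [exists 0%nat | exists 1%nat]; exact h. }
  apply (uniqueness_sum _ _ _ Hsum).
  assert (Hpartial : forall n,
            sum_f_R0 (fun n => Pr D (C n)) (S n) = Pr D A + Pr D B).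
  { induction n; simpl in *; [reflexivity|].
    rewrite IHn; change (Pr D (fun _ => False)) with (Pr D (fun _ : T => False)).
    rewrite Pr_empty; ring. }
  intros eps Heps; exists 1%nat; intros [|n] Hn; [lia|].
  rewrite Hpartial; unfold R_dist; rewrite Rminus_diag, Rabs_R0; exact Heps.
Qed.

Lemma Pr_mono A B :
  meas D A -> meas D B -> (forall t, A t -> B t) -> Pr D A <= Pr D B.
Proof.
  intros HA HB Hsub.
  assert (HBA : meas D (fun t => B t /\ ~ A t))
    by (apply meas_and; [| apply meas_compl]; assumption).
  rewrite (Pr_ext _ D B (fun t => A t \/ (B t /\ ~ A t))).
  2:{ intros t; split; [destruct (classic (A t)); tauto | intros [h|[h _]]; auto]. }
  rewrite Pr_disjoint_or by (auto; tauto).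
  pose proof (Pr_nonneg _ D _ HBA); lra.
Qed.

Lemma Pr_null_or A B :
  meas D A -> meas D B -> Pr D A = 0 -> Pr D B = 0 ->
  Pr D (fun t => A t \/ B t) = 0.
Proof.
  intros HA HB HA0 HB0.
  pose proof (Pr_nonneg _ D _ HA).
  pose proof (Pr_nonneg _ D _ (meas_or _ _ HA HB)).
  assert (Pr D (fun t => A t \/ B t) <= Pr D A + Pr D B).
  { rewrite (Pr_ext _ D _ (fun t => A t \/ (B t /\ ~ A t)))
      by (intros t; split; [destruct (classic (A t)); tauto | tauto]).
    assert (HBA : meas D (fun t => B t /\ ~ A t))
      by (apply meas_and; [| apply meas_compl]; assumption).
    rewrite Pr_disjoint_or by (auto; tauto).
    assert (Pr D (fun t => B t /\ ~ A t) <= Pr D B) by (apply Pr_mono; tauto).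
    lra. }
  lra.
Qed.

Lemma Pr_compl A : meas D A -> Pr D (fun t => ~ A t) = 1 - Pr D A.
Proof.
  intros HA; rewrite <- (Pr_full _ D).
  rewrite (Pr_ext _ D (fun _ => True) (fun t => A t \/ ~ A t))
    by (intros t; split; [intros; apply classic | tauto]).
  rewrite Pr_disjoint_or; auto using meas_compl; ring.
Qed.

Lemma cond_prob_one_null A B :
  meas D A -> meas D (fun t => A t /\ B t) ->
  (0 < Pr D A -> Pr D (fun t => A t /\ B t) / Pr D A = 1) ->
  meas D (fun t => A t /\ ~ B t) /\ Pr D (fun t => A t /\ ~ B t) = 0.
Proof.
  intros HA HAB Hcond.
  assert (HAnB : meas D (fun t => A t /\ ~ B t)).
  { apply (meas_ext _ D (fun t => A t /\ ~ (A t /\ B t))); [tauto|].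
    apply meas_and; [| apply meas_compl]; assumption. }
  split; [exact HAnB|].
  assert (Hsplit : Pr D A = Pr D (fun t => A t /\ B t) + Pr D (fun t => A t /\ ~ B t)).
  { rewrite <- Pr_disjoint_or by (auto; tauto).
    apply Pr_ext; intros t; split; [destruct (classic (B t)); tauto | tauto]. }
  pose proof (Pr_nonneg _ D _ HAB); pose proof (Pr_nonneg _ D _ HAnB).
  destruct (Rlt_or_le 0 (Pr D A)) as [Hpos|]; [|lra].
  specialize (Hcond Hpos).
  assert (Pr D (fun t => A t /\ B t) = Pr D A).
  { apply (Rmult_eq_reg_r (/ Pr D A)); [| apply Rinv_neq_0_compat; lra].
    rewrite Rinv_r by lra; exact Hcond. }
  lra.
Qed.

Lemma Pr_null_finite_union (N : nat -> T -> Prop) n :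
  (forall i, (i < n)%nat -> meas D (N i) /\ Pr D (N i) = 0) ->
  meas D (fun t => exists i, (i < n)%nat /\ N i t) /\
  Pr D (fun t => exists i, (i < n)%nat /\ N i t) = 0.
Proof.
  induction n as [|n IH]; intros HN.
  - assert (Hext : forall t, False <-> exists i, (i < 0)%nat /\ N i t)
      by (intros t; split; [tauto | intros [i [Hi _]]; lia]).
    split; [exact (meas_ext _ D _ _ Hext meas_empty)|].
    rewrite <- (Pr_ext _ D _ _ Hext); exact Pr_empty.
  - destruct IH as [Hm H0]; [intros i Hi; apply HN; lia|].
    destruct (HN n) as [Hnm Hn0]; [lia|].
    assert (Hext : forall t, ((exists i, (i < n)%nat /\ N i t) \/ N n t) <->
                             exists i, (i < S n)%nat /\ N i t).
    { intros t; split.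
      - intros [[i [Hi Ht]]|Ht]; [exists i | exists n]; split; auto; lia.
      - intros [i [Hi Ht]]; destruct (Nat.eq_dec i n) as [->|]; [now right|].
        left; exists i; split; auto; lia. }
    split; [exact (meas_ext _ D _ _ Hext (meas_or _ _ Hm Hnm))|].
    rewrite <- (Pr_ext _ D _ _ Hext); apply Pr_null_or; auto.
Qed.

Lemma null_off_good_cells k (Cell Good : nat -> T -> Prop) (E : T -> Prop) :
  meas D (fun t => exists i, (i < k)%nat /\ Cell i t) ->
  Pr D (fun t => exists i, (i < k)%nat /\ Cell i t) = 1 ->
  (forall i, (i < k)%nat ->
     meas D (Cell i) /\ meas D (fun t => Cell i t /\ Good i t) /\
     (0 < Pr D (Cell i) -> Pr D (fun t => Cell i t /\ Good i t) / Pr D (Cell i) = 1)) ->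
  meas D E ->
  (forall t i, (i < k)%nat -> Cell i t -> Good i t -> ~ E t) ->
  Pr D E = 0.
Proof.
  intros HUm HU1 Hcells HE Hdisj.
  set (U := fun t => exists i, (i < k)%nat /\ Cell i t) in *.
  set (Bad := fun i t => Cell i t /\ ~ Good i t).
  assert (HBad : meas D (fun t => exists i, (i < k)%nat /\ Bad i t) /\
                 Pr D (fun t => exists i, (i < k)%nat /\ Bad i t) = 0).
  { apply Pr_null_finite_union; intros i Hi.
    destruct (Hcells i Hi) as (HC & HCG & Hcond).
    exact (cond_prob_one_null _ _ HC HCG Hcond). }
  destruct HBad as [HBm HB0].
  assert (HnU : meas D (fun t => ~ U t)) by (apply meas_compl; exact HUm).
  assert (HnU0 : Pr D (fun t => ~ U t) = 0) by (rewrite (Pr_compl _ HUm); lra).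
  assert (HEle : Pr D E <= Pr D (fun t => ~ U t \/ exists i, (i < k)%nat /\ Bad i t)).
  { apply Pr_mono; auto using meas_or.
    intros t Ht; destruct (classic (U t)) as [[i [Hi HC]]|]; [|now left].
    right; exists i; split; [exact Hi|]; split; [exact HC|].
    intros HG; exact (Hdisj t i Hi HC HG Ht). }
  rewrite Pr_null_or in HEle by assumption.
  pose proof (Pr_nonneg _ D _ HE); lra.
Qed.

End Probability.

Lemma rsum_ext n F G : (forall l, (l < n)%nat -> F l = G l) -> rsum n F = rsum n G.
Proof. induction n; simpl; intros H; auto. rewrite IHn, H; auto. Qed.

Lemma rsum_minus n F G : rsum n (fun l => F l - G l) = rsum n F - rsum n G.
Proof. induction n; simpl; [ring | rewrite IHn; ring]. Qed.

Lemma rsum_scal n c F : rsum n (fun l => F l * c) = rsum n F * c.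
Proof. induction n; simpl; [ring | rewrite IHn; ring]. Qed.

Lemma rsum_le n F G : (forall l, (l < n)%nat -> F l <= G l) -> rsum n F <= rsum n G.
Proof.
  induction n; simpl; intros H; [lra|].
  assert (rsum n F <= rsum n G) by (apply IHn; auto).
  pose proof (H n (Nat.lt_succ_diag_r n)); lra.
Qed.

Lemma rsum_nonneg n F : (forall l, (l < n)%nat -> 0 <= F l) -> 0 <= rsum n F.
Proof.
  intros H; replace 0 with (rsum n (fun _ => 0)); [apply rsum_le; exact H|].
  clear H; induction n; simpl; lra.
Qed.

Lemma rsum_abs n F : Rabs (rsum n F) <= rsum n (fun l => Rabs (F l)).
Proof.
  induction n; simpl; [rewrite Rabs_R0; lra|].
  eapply Rle_trans; [apply Rabs_triang | lra].
Qed.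

Lemma rmax_ge m F j : (j < m)%nat -> F j <= rmax m F.
Proof.
  induction m as [|[|m] IH]; intros Hj; [lia | simpl; replace j with 0%nat by lia; lra|].
  change (rmax (S (S m)) F) with (Rmax (rmax (S m) F) (F (S m))).
  destruct (Nat.eq_dec j (S m)) as [->|]; [apply Rmax_r|].
  eapply Rle_trans; [apply IH; lia | apply Rmax_l].
Qed.

Lemma rmax_le m F e : 0 <= e -> (forall j, (j < m)%nat -> F j <= e) -> rmax m F <= e.
Proof.
  intros He; induction m as [|[|m] IH]; intros H; [simpl; lra | apply H; lia|].
  change (rmax (S (S m)) F) with (Rmax (rmax (S m) F) (F (S m))).
  apply Rmax_lub; [apply IH; intros; apply H; lia | apply H; lia].
Qed.

(** Cauchy-Schwarz against the all-ones vector: ||w||_1 <= sqrt n ||w||_2.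
    It follows from 0 <= sum_l (|w_l| - S/n)^2 = Q - S^2/n, where S = ||w||_1
    and Q = ||w||_2^2. *)
Lemma l1_le_sqrt_l2 n (w : nat -> R) :
  rsum n (fun l => Rabs (w l)) <= sqrt (INR n) * sqrt (rsum n (fun l => w l ^ 2)).
Proof.
  set (L1 := rsum n (fun l => Rabs (w l))).
  set (Q := rsum n (fun l => w l ^ 2)).
  assert (HS : 0 <= L1) by (apply rsum_nonneg; intros; apply Rabs_pos).
  assert (HQ : 0 <= Q) by (apply rsum_nonneg; intros; apply pow2_ge_0).
  destruct n as [|n]; [unfold L1; simpl; rewrite sqrt_0; lra|].
  assert (Hn : 0 < INR (S n)) by (apply lt_0_INR; lia).
  assert (Hexpand : forall t, rsum (S n) (fun l => (Rabs (w l) - t) ^ 2)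
                              = Q - 2 * t * L1 + INR (S n) * t ^ 2).
  { intros t; unfold Q, L1; generalize (S n) as p; induction p; cbn [rsum].
    - simpl; ring.
    - rewrite IHp, S_INR, <- (pow2_abs (w p)); ring. }
  assert (Hvar := rsum_nonneg (S n) (fun l => (Rabs (w l) - L1 / INR (S n)) ^ 2)
                    (fun l _ => pow2_ge_0 _)).
  rewrite Hexpand in Hvar.
  replace (Q - 2 * (L1 / INR (S n)) * L1 + INR (S n) * (L1 / INR (S n)) ^ 2)
    with ((INR (S n) * Q - L1 * L1) / INR (S n)) in Hvar by (field; lra).
  assert (L1 * L1 <= INR (S n) * Q).
  { apply Rmult_le_compat_r with (r := INR (S n)) in Hvar; [|lra].
    unfold Rdiv in Hvar; rewrite Rmult_0_l, Rmult_assoc, Rinv_l, Rmult_1_r in Hvar; lra. }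
  rewrite <- sqrt_mult by lra; rewrite <- (sqrt_square L1) by lra.
  apply sqrt_le_1_alt; lra.
Qed.

Lemma rho_complement s : 1 - rho s = rho (- s).
Proof.
  unfold rho; rewrite Ropp_involutive, exp_Ropp.
  pose proof (exp_pos s); field; split; [apply Rgt_not_eq; nra | lra].
Qed.

Lemma rho_bounds s : 0 <= rho s <= 1 /\ rho s <= exp s.
Proof.
  unfold rho; pose proof (exp_pos (- s)) as Hneg.
  assert (Hinv : exp s = / exp (- s)) by (rewrite exp_Ropp, Rinv_inv; reflexivity).
  repeat split.
  - apply Rle_mult_inv_pos; lra.
  - apply Rmult_le_reg_r with (1 + exp (- s)); [lra|].
    unfold Rdiv; rewrite Rmult_assoc, Rinv_l by lra; lra.
  - rewrite Hinv; unfold Rdiv; rewrite Rmult_1_l.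
    apply Rinv_le_contravar; lra.
Qed.

(** Away from the threshold by more than delta, the steep sigmoid rho (cs t)
    is within exp(-cs delta) of the step function; for cs <= 0 the bound is
    at least 1 and holds trivially. *)
Lemma rho_near_one cs t delta : 0 < delta -> delta < t ->
  Rabs (rho (cs * t) - 1) <= exp (- (cs * delta)).
Proof.
  intros Hd Ht.
  rewrite <- Rabs_Ropp, Ropp_minus_distr, rho_complement.
  destruct (rho_bounds (- (cs * t))) as [[H0 H1] Hexp].
  rewrite Rabs_right by lra.
  destruct (Rle_or_lt 0 cs).
  - eapply Rle_trans; [exact Hexp | apply exp_monotone; nra].
  - assert (1 <= exp (- (cs * delta))) by (rewrite <- exp_0; apply exp_monotone; nra).
    lra.
Qed.

Lemma rho_near_zero cs t delta : 0 < delta -> t < - delta ->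
  Rabs (rho (cs * t) - 0) <= exp (- (cs * delta)).
Proof.
  intros Hd Ht.
  replace (rho (cs * t) - 0) with (- (rho (cs * - t) - 1)).
  - rewrite Rabs_Ropp; apply rho_near_one; lra.
  - replace (cs * - t) with (- (cs * t)) by ring.
    rewrite <- rho_complement; ring.
Qed.

Lemma thresholds_monotone (b : vec) k : (forall i, (i < k)%nat -> b i < b (S i)) ->
  forall p q, (p <= q <= k)%nat -> b p <= b q.
Proof.
  intros Hb p q; induction q as [|q IH]; intros Hpq.
  - replace p with 0%nat by lia; lra.
  - destruct (Nat.eq_dec p (S q)) as [->|]; [lra|].
    assert (b p <= b q) by (apply IH; lia).
    assert (b q < b (S q)) by (apply Hb; lia); lra.
Qed.

Lemma Wmat_prefix_sum (f : nat -> nat -> R) y j i :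
  rsum (S i) (fun l => Wmat f y l j) = f (y i) j.
Proof.
  induction i as [|i IH]; [simpl; ring|].
  change (rsum (S (S i)) (fun l => Wmat f y l j))
    with (rsum (S i) (fun l => Wmat f y l j) + Wmat f y (S i) j).
  rewrite IH; simpl; ring.
Qed.

(** The ideal hidden layer on region X_i: unit l fires iff l <= i. *)
Definition step_profile (i l : nat) : R := if Nat.leb l i then 1 else 0.

Lemma Wmat_step_sum (f : nat -> nat -> R) y j i k : (i < k)%nat ->
  rsum k (fun l => Wmat f y l j * step_profile i l) = f (y i) j.
Proof.
  intros Hik; replace k with (S i + (k - S i))%nat by lia.
  induction (k - S i)%nat as [|p IH].
  - rewrite Nat.add_0_r, <- (Wmat_prefix_sum f y j i).
    apply rsum_ext; intros l Hl; unfold step_profile.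
    rewrite (proj2 (Nat.leb_le l i)) by lia; ring.
  - rewrite Nat.add_succ_r; cbn [rsum]; rewrite IH; unfold step_profile.
    rewrite (proj2 (Nat.leb_gt (S i + p) i)) by lia; ring.
Qed.

Lemma gnet_error_on_region d k (f : nat -> nat -> R) y a b cs delta x i j :
  0 < delta -> (forall l, (l < k)%nat -> b l < b (S l)) -> (i < k)%nat ->
  b i + delta < dot d a x < b (S i) - delta ->
  Rabs (gnet d k f y a b cs x j - f (y i) j) <=
  exp (- (cs * delta)) * (sqrt (INR k) * colnorm k f y j).
Proof.
  intros Hd Hb Hik Hx.
  rewrite <- (Wmat_step_sum f y j i k Hik); unfold gnet; rewrite <- rsum_minus.
  eapply Rle_trans; [apply rsum_abs|].
  eapply Rle_trans.
  - apply rsum_le with (G := fun l => Rabs (Wmat f y l j) * exp (- (cs * delta))).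
    intros l Hl.
    replace (Wmat f y l j * rho (cs * dot d a x - cs * b l)
             - Wmat f y l j * step_profile i l)
      with (Wmat f y l j * (rho (cs * (dot d a x - b l)) - step_profile i l))
      by (rewrite Rmult_minus_distr_l, Rmult_minus_distr_l; reflexivity).
    rewrite Rabs_mult; apply Rmult_le_compat_l; [apply Rabs_pos|].
    unfold step_profile; destruct (Nat.leb l i) eqn:Hli.
    + apply Nat.leb_le in Hli; apply rho_near_one; [exact Hd|].
      assert (b l <= b i) by (apply (thresholds_monotone b k Hb); lia); lra.
    + apply Nat.leb_gt in Hli; apply rho_near_zero; [exact Hd|].
      assert (b (S i) <= b l) by (apply (thresholds_monotone b k Hb); lia); lra.
  - rewrite rsum_scal, Rmult_comm.
    apply Rmult_le_compat_l; [left; apply exp_pos | apply l1_le_sqrt_l2].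
Qed.

Lemma maxcol_pos_rows k m (f : nat -> nat -> R) y : 0 < maxcol k m f y -> (0 < k)%nat.
Proof.
  intros HM; destruct k; [|lia]; exfalso.
  assert (maxcol 0 m f y <= 0); [|lra].
  apply rmax_le; [lra|]; intros j _; unfold colnorm; simpl; rewrite sqrt_0; lra.
Qed.

Lemma c_s_balance k m (f : nat -> nat -> R) y delta eps :
  0 < delta -> 0 < eps -> 0 < sqrt (INR k) -> 0 < maxcol k m f y ->
  exp (- (c_s k m f y delta eps * delta)) * (sqrt (INR k) * maxcol k m f y) = eps.
Proof.
  intros Hd He Hk HM; unfold c_s.
  replace (/ delta * ln (sqrt (INR k) * maxcol k m f y / eps) * delta)
    with (ln (sqrt (INR k) * maxcol k m f y / eps)) by (field; lra).
  rewrite exp_Ropp, exp_ln by (apply Rdiv_lt_0_compat; [nra | exact He]).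
  field; repeat split; lra.
Qed.

Theorem theorem1 (d c k m : nat) (X : vec -> Prop) (D : distribution sample)
  (delta : R) (a b : vec) (y : nat -> nat) (f : nat -> nat -> R) (eps : R) :
  distribution_on D X c ->
  k_separable_witness D X d c k delta a b y ->
  (* f : Y -> R^m injective *)
  (forall y1 y2, (1 <= y1 <= c)%nat -> (1 <= y2 <= c)%nat ->
     (forall j, (j < m)%nat -> f y1 j = f y2 j) -> y1 = y2) ->
  0 < maxcol k m f y ->
  0 < eps ->
  let cs := c_s k m f y delta eps in
  let E := fun z : sample =>
     rmax m (fun j => Rabs (gnet d k f y a b cs (fst z) j - f (snd z) j)) > eps in
  meas D E ->
  Pr D E = 0.
Proof.
  intros _ Hsep _ HM Heps cs E HE.
  destruct Hsep as (Hd & _ & Hb & _ & Hcells & HUm & HU1); cbv zeta in Hcells.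
  assert (Hk : 0 < sqrt (INR k))
    by (apply sqrt_lt_R0, lt_0_INR, (maxcol_pos_rows k m f y HM)).
  assert (Hbal := c_s_balance k m f y delta eps Hd Heps Hk HM).
  apply (null_off_good_cells _ D k
           (fun i z => region d X a b delta i (fst z)) (fun i z => snd z = y i) E);
    auto.
  intros z i Hik [_ Hx] Hlabel HEz; unfold E in HEz; rewrite Hlabel in HEz.
  enough (rmax m (fun j => Rabs (gnet d k f y a b cs (fst z) j - f (y i) j)) <= eps)
    by lra.
  apply rmax_le; [lra|]; intros j Hj.
  eapply Rle_trans; [exact (gnet_error_on_region d k f y a b cs delta _ i j Hd Hb Hik Hx)|].
  rewrite <- Hbal; apply Rmult_le_compat_l; [left; apply exp_pos|].
  apply Rmult_le_compat_l; [lra | apply (rmax_ge m (colnorm k f y)); exact Hj].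
Qed.
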